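(* Let $n\ge2$ and let $\sigma$ be a $*$-representation of $\mathcal{E}_n$ on $\mathcal{H}$ with generators $S_i=\sigma(\mathfrak{s}_i)$. Then $S=(S_1,\dots,S_n)$ has a wandering vector if and only if there exists $X\in\mathcal{X}(\sigma)$ which is bounded below.
   Context: $\mathcal{E}_n$ is the universal C*-algebra generated by isometries $\mathfrak{s}_1,\dots,\mathfrak{s}_n$ with pairwise orthogonal ranges. A vector $\eta\in\mathcal{H}$ is wandering if $\{S_w\eta:w\in\mathbb{F}_n^+\}$ is orthonormal, where $\mathbb{F}_n^+$ is the free semigroup on $n$ letters and $S_w=S_{i_1}\cdots S_{i_k}$ for $w=i_1\cdots i_k$. $L_i$ are the left creation operators $L_i\xi_w=\xi_{iw}$ on the Fock space $\ell^2(\mathbb{F}_n^+)$. $\mathcal{X}(\sigma)$ is the set of bounded $X:\ell^2(\mathbb{F}_n^+)\to\mathcal{H}$ with $S_iX=XL_i$ for $1\le i\le n$. *)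

From HB Require Import structures.
From mathcomp Require Import all_boot all_algebra.
From mathcomp Require Import all_classical all_reals all_analysis.
From mathcomp Require Import complex.
Set Implicit Arguments. Unset Strict Implicit. Unset Printing Implicit Defensive.
Import GRing.Theory Num.Theory.
Local Open Scope ring_scope.

(* Complex numbers over a real type R : R[i].  Inner products are linear in
   the first variable and conjugate-linear in the second. *)

Definition csq (R : realType) (z : R[i]) : R :=
  (complex.Re z) ^+ 2 + (complex.Im z) ^+ 2.

Record hilbert (R : realType) (H : lmodType R[i]) := Hilbert {
  ip : H -> H -> R[i];
  ip_linl : forall (a : R[i]) (x y z : H), ip (a *: x + y) z = a * ip x z + ip y z;
  ip_conj : forall x y : H, ip y x = (ip x y)^*;
  ip_ge0 : forall x : H, 0 <= ip x x;
  ip_eq0 : forall x : H, ip x x = 0 -> x = 0;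
  ip_complete : forall u : nat -> H,
    (forall e : R, 0 < e -> exists N : nat, forall m k : nat, (N <= m)%N -> (N <= k)%N ->
        Num.sqrt (complex.Re (ip (u m - u k) (u m - u k))) < e) ->
    exists l : H, forall e : R, 0 < e -> exists N : nat, forall m : nat, (N <= m)%N ->
        Num.sqrt (complex.Re (ip (u m - l) (u m - l))) < e
}.

Definition hnorm (R : realType) (H : lmodType R[i]) (hs : hilbert H) (x : H) : R :=
  Num.sqrt (complex.Re (ip hs x x)).

Definition bounded_linear (R : realType) (H : lmodType R[i]) (hs : hilbert H)
  (T : H -> H) : Prop :=
  (forall (a : R[i]) (x y : H), T (a *: x + y) = a *: T x + T y) /\
  (exists M : R, forall x : H, hnorm hs (T x) <= M * hnorm hs x).

(* A *-representation sigma of E_n on H, given by its generators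
   S_i = sigma(s_i): bounded operators that are isometries (S_i^* S_i = 1)
   with pairwise orthogonal ranges (S_i^* S_j = 0 for i <> j).
   By the universal property of E_n these are exactly the (unital)
   *-representations of E_n. *)
Definition En_rep (R : realType) (n : nat) (H : lmodType R[i]) (hs : hilbert H)
  (S : 'I_n -> H -> H) : Prop :=
  (forall i, bounded_linear hs (S i)) /\
  (forall i x y, ip hs (S i x) (S i y) = ip hs x y) /\
  (forall i j x y, i != j -> ip hs (S i x) (S j y) = 0).

(* words of the free semigroup F_n^+ are sequences of letters in 'I_n;
   S_w = S_{i1} ... S_{ik} for w = i1 ... ik (the empty word gives the identity) *)
Definition Sword (R : realType) (n : nat) (H : lmodType R[i])
  (S : 'I_n -> H -> H) (w : seq 'I_n) : H -> H :=
  foldr (fun i T => S i \o T) id w.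

Definition wandering (R : realType) (n : nat) (H : lmodType R[i]) (hs : hilbert H)
  (S : 'I_n -> H -> H) (eta : H) : Prop :=
  forall w w' : seq 'I_n,
    ip hs (Sword S w eta) (Sword S w' eta) = (w == w')%:R.

Definition l2 (R : realType) (n : nat) (f : seq 'I_n -> R[i]) : Prop :=
  (\esum_(w in [set: seq 'I_n]) (csq (f w))%:E < +oo)%E.

Definition l2norm (R : realType) (n : nat) (f : seq 'I_n -> R[i]) : R :=
  Num.sqrt (fine (\esum_(w in [set: seq 'I_n]) (csq (f w))%:E)).

(* left creation operator L_i xi_w = xi_{iw} *)
Definition Lcr (R : realType) (n : nat) (i : 'I_n) (f : seq 'I_n -> R[i])
  : seq 'I_n -> R[i] :=
  fun v => match v with
           | [::] => 0
           | j :: w => if j == i then f w else 0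
           end.

(* X in X(sigma): a bounded linear map l^2(F_n^+) -> H with S_i X = X L_i.
   X is given as a function on all of (seq 'I_n -> C); only its values on
   l^2 matter. *)
Definition in_Xsigma (R : realType) (n : nat) (H : lmodType R[i]) (hs : hilbert H)
  (S : 'I_n -> H -> H) (X : (seq 'I_n -> R[i]) -> H) : Prop :=
  (forall (a : R[i]) (f g : seq 'I_n -> R[i]), l2 f -> l2 g ->
      X (fun w => a * f w + g w) = a *: X f + X g) /\
  (exists M : R, forall f, l2 f -> hnorm hs (X f) <= M * l2norm f) /\
  (forall (i : 'I_n) f, l2 f -> S i (X f) = X (Lcr i f)).

Definition bounded_below (R : realType) (n : nat) (H : lmodType R[i]) (hs : hilbert H)
  (X : (seq 'I_n -> R[i]) -> H) : Prop :=
  exists c : R, 0 < c /\ forall f, l2 f -> c * l2norm f <= hnorm hs (X f).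

(* If eta is wandering, the vectors S_w eta are orthonormal, so xi_w |-> S_w eta
   extends to an isometry X on the Fock space, and X intertwines L_i with S_i
   because S_i S_w = S_(iw).
   Conversely, let X be bounded below by c > 0 and let Y be the closure of the
   image under X of the l^2 functions vanishing at the empty word.  Since
   |xi_() - f| >= 1 for such f, the vector X xi_() lies at distance d >= c from Y.
   A minimising sequence is Cauchy by the parallelogram law, so there is a nearest
   point p in Y, and X xi_() - p is orthogonal to Y.  As S_w X xi_() = X xi_w and
   L_i maps l^2 into functions vanishing at the empty word, S_w (X xi_() - p) lies
   in Y for every nonempty word w.  Hence (X xi_() - p) / d is orthogonal to all
   its images S_w, and isometry plus orthogonal ranges of the S_i make it
   wandering. *)

From mathcomp Require Import all_boot all_order all_algebra.
From mathcomp Require Import all_classical all_reals all_analysis.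
From mathcomp Require Import complex ring lra.
Set Implicit Arguments. Unset Strict Implicit. Unset Printing Implicit Defensive.
Import Order.TTheory GRing.Theory Num.Theory.
Local Open Scope ring_scope.
Local Open Scope complex_scope.
Local Notation Re := complex.Re.
Local Notation Im := complex.Im.

Section ComplexFacts.
Variable R : realType.
Implicit Types (a b : R[i]) (r : R).

Lemma ReD a b : Re (a + b) = Re a + Re b. Proof. by case: a; case: b. Qed.

Lemma Re_sum (I : Type) (s : seq I) (F : I -> R[i]) :
  Re (\sum_(i <- s) F i) = \sum_(i <- s) Re (F i).
Proof. exact: (big_morph _ ReD). Qed.

Lemma Re_conjc a : Re a^*%R = Re a. Proof. by case: a. Qed.

Lemma Re_realM r a : Re (r%:C * a) = r * Re a.
Proof. by case: a => x y /=; rewrite mul0r subr0. Qed.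

Lemma Re_Zi a : Re ('i^*%R * a) = Im a.
Proof. by case: a => x y /=; lra. Qed.

Lemma conj_realC r : (r%:C)^*%R = r%:C.
Proof. by apply/eqP; rewrite eq_complex /= oppr0 !eqxx. Qed.

Lemma ge0_complexE a : 0 <= a -> a = (Re a)%:C.
Proof. by case: a => x y; rewrite lecE => /andP[/eqP /= -> _]. Qed.

Lemma complex_eq0 a : Re a = 0 -> Im a = 0 -> a = 0.
Proof. by case: a => x y /= -> ->. Qed.

Lemma csq_ge0 a : 0 <= csq a.
Proof. by rewrite /csq addr_ge0 // sqr_ge0. Qed.

Lemma csq0 : csq (0 : R[i]) = 0.
Proof. by rewrite /csq expr0n addr0. Qed.

Lemma csq_real r : csq r%:C = r ^+ 2.
Proof. by rewrite /csq /= expr0n addr0. Qed.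

Lemma csqM a b : csq (a * b) = csq a * csq b.
Proof. by case: a => x y; case: b => z t; rewrite /csq /=; ring. Qed.

Lemma csqD_le a b : csq (a + b) <= 2 * csq a + 2 * csq b.
Proof.
case: a => x y; case: b => z t; rewrite /csq /=.
by have := sqr_ge0 (x - z); have := sqr_ge0 (y - t); nra.
Qed.

Lemma mulcJ a : a * a^*%R = (csq a)%:C.
Proof.
case: a => x y; apply/eqP; rewrite eq_complex /csq /=.
by apply/andP; split; apply/eqP; ring.
Qed.

End ComplexFacts.

Section LinearMaps.
Variables (K : pzRingType) (V : lmodType K).
Implicit Types (T : V -> V) (x y : V).

Definition linmap T := forall a x y, T (a *: x + y) = a *: T x + T y.

Lemma linmap0 T : linmap T -> T 0 = 0.
Proof. by move=> T_lin; have := T_lin (-1) 0 0; rewrite !scaleN1r !addNr. Qed.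

Lemma linmapB T : linmap T -> forall x y, T (x - y) = T x - T y.
Proof. by move=> T_lin x y; rewrite addrC -scaleN1r T_lin scaleN1r addrC. Qed.

Lemma linmapZ T : linmap T -> forall a x, T (a *: x) = a *: T x.
Proof. by move=> T_lin a x; rewrite -[a *: x]addr0 T_lin linmap0 // addr0. Qed.

Lemma linmap_sum T (I : Type) (s : seq I) (F : I -> V) : linmap T ->
  T (\sum_(i <- s) F i) = \sum_(i <- s) T (F i).
Proof.
move=> T_lin; apply: (big_morph T _ (linmap0 T_lin)) => x y.
by rewrite -[x]scale1r T_lin !scale1r.
Qed.

Lemma linmap_comp T1 T2 : linmap T1 -> linmap T2 -> linmap (T1 \o T2).
Proof. by move=> T1_lin T2_lin a x y; rewrite /= T2_lin T1_lin. Qed.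

End LinearMaps.

Lemma sqr_le_addr (R : realFieldType) (d t e : R) : 0 <= d -> 0 < e -> 0 <= t ->
  t <= d + e / (2 * d + 1 + e) -> t ^+ 2 <= d ^+ 2 + e.
Proof.
move=> d0 e0 t0; have den_gt0 : 0 < 2 * d + 1 + e by lra.
set delta := e / _ => t_le.
have delta_den : delta * (2 * d + 1 + e) = e by rewrite mulfVK ?gt_eqF.
have delta0 : 0 < delta by rewrite divr_gt0.
have delta1 : delta <= 1 by rewrite ler_pdivrMr //; lra.
have : t ^+ 2 <= (d + delta) ^+ 2 by rewrite ler_pXn2r ?nnegrE //; lra.
nra.
Qed.

Lemma natinv_lt (R : realType) (e : R) : 0 < e ->
  exists N, forall k, (N <= k)%N -> k.+1%:R^-1 < e.
Proof.
move=> e0; have [N hN] := ltr_add_invr (y := 0) e0.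
exists N => k Nk; apply: le_lt_trans hN; rewrite add0r lef_pV2 ?posrE //.
by rewrite ler_nat.
Qed.

Section HilbertSpace.
Variables (R : realType) (H : lmodType R[i]) (hs : hilbert H).
Local Notation ip := (ip hs).
Local Notation hn := (hnorm hs).
Implicit Types (x y z : H) (a : R[i]) (r : R) (u v : nat -> H).

Lemma ipDl x y z : ip (x + y) z = ip x z + ip y z.
Proof. by have := ip_linl hs 1 x y z; rewrite scale1r mul1r. Qed.

Lemma ip0l z : ip 0 z = 0.
Proof. by have := ip_linl hs (-1) z z z; rewrite scaleN1r addNr mulN1r addNr. Qed.

Lemma ipZl a x z : ip (a *: x) z = a * ip x z.
Proof. by have := ip_linl hs a x 0 z; rewrite addr0 ip0l addr0. Qed.

Lemma ipNl x z : ip (- x) z = - ip x z.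
Proof. by rewrite -scaleN1r ipZl mulN1r. Qed.

Lemma ipDr x y z : ip z (x + y) = ip z x + ip z y.
Proof. by rewrite [ip z x]ip_conj [ip z y]ip_conj (ip_conj hs (x + y)) ipDl rmorphD. Qed.

Lemma ipZr a x z : ip z (a *: x) = a^*%R * ip z x.
Proof. by rewrite [ip z x]ip_conj (ip_conj hs (a *: x)) ipZl rmorphM. Qed.

Lemma ip0r z : ip z 0 = 0.
Proof. by rewrite (ip_conj hs 0) ip0l rmorph0. Qed.

Lemma ipNr x z : ip z (- x) = - ip z x.
Proof. by rewrite -scaleN1r ipZr rmorphN1 mulN1r. Qed.

Lemma ip_suml (I : Type) (s : seq I) (F : I -> H) z :
  ip (\sum_(i <- s) F i) z = \sum_(i <- s) ip (F i) z.
Proof. exact: (big_morph (ip^~ z) (fun x y => ipDl x y z) (ip0l z)). Qed.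

Lemma ip_sumr (I : Type) (s : seq I) (F : I -> H) z :
  ip z (\sum_(i <- s) F i) = \sum_(i <- s) ip z (F i).
Proof. exact: (big_morph (ip z) (fun x y => ipDr x y z) (ip0r z)). Qed.

Lemma hn_ge0 x : 0 <= hn x.
Proof. exact: sqrtr_ge0. Qed.

Lemma ipxx x : ip x x = (hn x ^+ 2)%:C.
Proof.
have ip_xx_ge0 := ip_ge0 hs x.
rewrite /hnorm sqr_sqrtr; first exact: ge0_complexE.
by move: ip_xx_ge0; rewrite lecE => /andP[].
Qed.

Lemma hn_sqr x : hn x ^+ 2 = Re (ip x x).
Proof. by rewrite ipxx. Qed.

Lemma hn0 : hn 0 = 0.
Proof. by rewrite /hnorm ip0l sqrtr0. Qed.

Lemma hn_eq0 x : hn x = 0 -> x = 0.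
Proof. by move=> hx0; apply: (ip_eq0 (h := hs)); rewrite ipxx hx0 expr0n. Qed.

Lemma hnN x : hn (- x) = hn x.
Proof. by rewrite /hnorm ipNl ipNr opprK. Qed.

Lemma hn_sub_sym x y : hn (x - y) = hn (y - x).
Proof. by rewrite -hnN opprB. Qed.

Lemma hn_sqrZ a x : hn (a *: x) ^+ 2 = csq a * hn x ^+ 2.
Proof. by rewrite hn_sqr ipZl ipZr mulrA mulcJ ipxx Re_realM. Qed.

Lemma hnZ a x : hn (a *: x) = Num.sqrt (csq a) * hn x.
Proof.
rewrite -[LHS]ger0_norm ?hn_ge0 // -sqrtr_sqr hn_sqrZ sqrtrM ?csq_ge0 //.
by rewrite sqrtr_sqr ger0_norm ?hn_ge0.
Qed.

Local Notation rip x y := (Re (ip x y)).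

Lemma rip_sym x y : rip x y = rip y x.
Proof. by rewrite (ip_conj hs x) Re_conjc. Qed.

Lemma ripZr r x y : rip x (r%:C *: y) = r * rip x y.
Proof. by rewrite ipZr conj_realC Re_realM. Qed.

Lemma ripZl r x y : rip (r%:C *: x) y = r * rip x y.
Proof. by rewrite ipZl Re_realM. Qed.

Lemma ripZi x y : rip x ('i *: y) = Im (ip x y).
Proof. by rewrite ipZr Re_Zi. Qed.

Lemma hn_sqrD x y : hn (x + y) ^+ 2 = hn x ^+ 2 + hn y ^+ 2 + 2 * rip x y.
Proof. by rewrite !hn_sqr ipDl !ipDr !ReD (rip_sym y x); lra. Qed.

Lemma hn_sqrZr r x y :
  hn (x + r%:C *: y) ^+ 2 = hn x ^+ 2 + 2 * r * rip x y + r ^+ 2 * hn y ^+ 2.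
Proof. by rewrite hn_sqrD ripZr hn_sqrZ csq_real; lra. Qed.

Lemma parallelogram x y :
  hn (x + y) ^+ 2 + hn (x - y) ^+ 2 = 2 * hn x ^+ 2 + 2 * hn y ^+ 2.
Proof.
have := hn_sqrZr (-1) x y; rewrite rmorphN1 scaleN1r => ->.
by rewrite hn_sqrD; lra.
Qed.

Lemma rip_le x y : rip x y <= hn x * hn y.
Proof.
have [x0|] := eqVneq (hn x) 0; first by rewrite x0 mul0r (hn_eq0 x0) ip0l.
have [Xvac|] := eqVneq (hn y) 0; first by rewrite Xvac mulr0 (hn_eq0 Xvac) ip0r.
move=> y_neq0 x_neq0.
have x_gt0 : 0 < hn x by rewrite lt0r x_neq0 hn_ge0.
have y_gt0 : 0 < hn y by rewrite lt0r y_neq0 hn_ge0.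
have := sqr_ge0 (hn ((hn y)%:C *: x + (- hn x)%:C *: y)).
rewrite hn_sqrZr hn_sqrZ ripZl !csq_real => h.
have ab_gt0 := mulr_gt0 x_gt0 y_gt0.
rewrite -subr_ge0 -(pmulr_rge0 _ ab_gt0).
nra.
Qed.

Lemma hn_triangle x y : hn (x + y) <= hn x + hn y.
Proof.
have := hn_sqrD x y; have := rip_le x y.
have := hn_ge0 x; have := hn_ge0 y; have := hn_ge0 (x + y).
nra.
Qed.

Lemma rip_eq0_of_min x z : (forall r, hn x <= hn (x + r%:C *: z)) -> rip x z = 0.
Proof.
move=> x_min; set rho := rip x z; set Q := hn z ^+ 2.
have Q1_gt0 : 0 < Q + 1 by rewrite ltr_wpDl ?sqr_ge0.
pose t := (Q + 1)^-1.
have tQ1 : t * (Q + 1) = 1 by rewrite mulVf ?gt_eqF.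
have t_gt0 : 0 < t by rewrite invr_gt0.
have := x_min (- rho * t).
rewrite -(ler_pXn2r (_ : 0 < 2)%N) ?nnegrE ?hn_ge0 // hn_sqrZr -/rho -/Q => h.
have : rho ^+ 2 * t * (1 + t) <= 0 by nra.
rewrite pmulr_lle0 ?addr_gt0 // pmulr_lle0 // => rho2_le0.
by apply/eqP; rewrite -sqrf_eq0 eq_le rho2_le0 sqr_ge0.
Qed.

Lemma ip_eq0_of_min x z : (forall a, hn x <= hn (x + a *: z)) -> ip x z = 0.
Proof.
move=> x_min; apply: complex_eq0; first exact: rip_eq0_of_min.
rewrite -ripZi; apply: rip_eq0_of_min => r.
by rewrite scalerA.
Qed.

Definition hcvg u l := forall e, 0 < e -> exists N, forall k, (N <= k)%N -> hn (u k - l) < e.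

Definition hcauchy u :=
  forall e, 0 < e -> exists N, forall j k, (N <= j)%N -> (N <= k)%N -> hn (u j - u k) < e.

Lemma hcauchy_cvg u : hcauchy u -> exists l, hcvg u l.
Proof. exact: ip_complete. Qed.

Lemma hcvg_cst x : hcvg (fun => x) x.
Proof. by move=> e e0; exists 0%N => k _; rewrite subrr hn0. Qed.

Lemma hcvg_uniq u l l' : hcvg u l -> hcvg u l' -> l = l'.
Proof.
move=> ul ul'; apply/eqP; rewrite -subr_eq0; apply/eqP/hn_eq0/eqP.
rewrite eq_le hn_ge0 andbT; apply/ler_addgt0Pr => e e0; rewrite add0r.
have e2 : 0 < e / 2 by rewrite divr_gt0.
have [N1 h1] := ul _ e2; have [N2 h2] := ul' _ e2.
pose k := maxn N1 N2.
have := h1 k (leq_maxl _ _); have := h2 k (leq_maxr _ _).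
have := hn_triangle (l - u k) (u k - l'); rewrite addrA subrK [hn (l - u k)]hn_sub_sym.
lra.
Qed.

Lemma hcvg_lin a u v l l' :
  hcvg u l -> hcvg v l' -> hcvg (fun k => a *: u k + v k) (a *: l + l').
Proof.
move=> ul vl' e e0.
pose M := Num.sqrt (csq a) + 1.
have M_gt0 : 0 < M by rewrite ltr_wpDl ?sqrtr_ge0.
have e2M : 0 < e / (2 * M) by rewrite divr_gt0 ?mulr_gt0.
have e2 : 0 < e / 2 by rewrite divr_gt0.
have [N1 h1] := ul _ e2M; have [N2 h2] := vl' _ e2.
exists (maxn N1 N2) => k; rewrite geq_max => /andP[k1 k2].
rewrite opprD addrACA -scalerBr.
apply: le_lt_trans (hn_triangle _ _) _; rewrite hnZ.
have := h1 k k1; have := h2 k k2; rewrite !ltr_pdivlMr ?mulr_gt0 //.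
have := hn_ge0 (u k - l); have := sqrtr_ge0 (csq a).
rewrite /M; nra.
Qed.

Lemma hcvg_isometry (T : H -> H) u l :
  (forall x y, T (x - y) = T x - T y) -> (forall x, hn (T x) = hn x) ->
  hcvg u l -> hcvg (T \o u) (T l).
Proof. by move=> TB Tiso ul e /ul[N hN]; exists N => k /hN; rewrite /= -TB Tiso. Qed.

Lemma hcvgBl y u l : hcvg u l -> hcvg (fun k => y - u k) (y - l).
Proof.
move=> ul; have := hcvg_lin (-1) ul (hcvg_cst y).
by rewrite scaleN1r addrC; under [X in hcvg X]funext => k do rewrite scaleN1r addrC.
Qed.

Lemma hn_cvg_ge u l r N : hcvg u l -> (forall k, (N <= k)%N -> r <= hn (u k)) -> r <= hn l.
Proof.
move=> ul r_le; apply/ler_addgt0Pr => e /ul[M hM].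
pose k := maxn M N.
have := hM k (leq_maxl _ _); have := r_le k (leq_maxr _ _).
by have := hn_triangle (u k - l) l; rewrite subrK; lra.
Qed.

Lemma hn_cvg_le u l r : hcvg u l ->
  (forall e, 0 < e -> exists N, forall k, (N <= k)%N -> hn (u k) <= r + e) -> hn l <= r.
Proof.
move=> ul le_r; apply/ler_addgt0Pr => e e0.
have e2 : 0 < e / 2 by rewrite divr_gt0.
have [N1 h1] := ul _ e2; have [N2 h2] := le_r _ e2.
pose k := maxn N1 N2.
have := h1 k (leq_maxl _ _); have := h2 k (leq_maxr _ _).
by have := hn_triangle (l - u k) (u k); rewrite subrK hn_sub_sym; lra.
Qed.

Lemma minimizing_cauchy (C : H -> Prop) y d u :
  (forall x z, C x -> C z -> C ((2^-1)%:C *: (x + z))) ->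
  0 <= d -> (forall x, C x -> d <= hn (y - x)) -> (forall k, C (u k)) ->
  (forall e, 0 < e -> exists N, forall k, (N <= k)%N -> hn (y - u k) <= d + e) ->
  hcauchy u.
Proof.
move=> C_mid d0 d_le Cu u_min e e0.
have eps0 : 0 < e ^+ 2 / 8 by rewrite divr_gt0 ?exprn_gt0.
have den_gt0 : 0 < 2 * d + 1 + e ^+ 2 / 8 by lra.
have [N hN] := u_min _ (divr_gt0 eps0 den_gt0).
have near_d k : (N <= k)%N -> hn (y - u k) ^+ 2 <= d ^+ 2 + e ^+ 2 / 8.
  by move=> Nk; apply: sqr_le_addr => //; [exact: hn_ge0 | exact: hN].
exists N => j k Nj Nk.
(* Parallelogram law: |u_j - u_k|^2 = 2|y - u_j|^2 + 2|y - u_k|^2 - 4|y - (u_j + u_k)/2|^2. *)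
have mid_ge : d ^+ 2 <= hn (y - (2^-1)%:C *: (u j + u k)) ^+ 2.
  by rewrite ler_pXn2r ?nnegrE ?hn_ge0 //; apply/d_le/C_mid.
have := parallelogram (y - u j) (y - u k).
have -> : y - u j + (y - u k) = 2%:C *: (y - (2^-1)%:C *: (u j + u k)).
  rewrite scalerBr scalerA -rmorphM mulfV ?pnatr_eq0 // scale1r.
  by rewrite -[2%:C]/((1 + 1)%:C) rmorphD scalerDl scale1r opprD addrACA.
have -> : y - u j - (y - u k) = u k - u j by rewrite opprB addrC addrA subrK.
rewrite hn_sqrZ csq_real hn_sub_sym => para.
have := near_d j Nj; have := near_d k Nk; have := hn_ge0 (u j - u k).
nra.
Qed.

End HilbertSpace.

Section SquareSummable.
Variable R : realType.

Lemma fsum_le_esum (T : choiceType) (h : T -> R) (s : seq T) :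
  (forall t, 0 <= h t) -> uniq s ->
  ((\sum_(t <- s) h t)%:E <= \esum_(t in [set: T]) (h t)%:E)%E.
Proof.
move=> h0 s_uniq; apply: esum_ge; exists [set` s]%classic.
  by split; [exact: finite_seq | by []].
by rewrite -fsbig_seq // sumEFin.
Qed.

Lemma esum_le (T : choiceType) (h : T -> R) (B : R) :
  (forall s, uniq s -> \sum_(t <- s) h t <= B) ->
  (\esum_(t in [set: T]) (h t)%:E <= B%:E)%E.
Proof.
move=> hB; apply: ge_ereal_sup => _ [F [finF _] <-].
by rewrite fsbig_finite // sumEFin lee_fin; apply: hB; exact: finmap.fset_uniq.
Qed.

Lemma esum_approx (T : choiceType) (h : T -> R) (e : R) :
  (forall t, 0 <= h t) -> 0 < e -> (\esum_(t in [set: T]) (h t)%:E < +oo)%E ->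
  exists s, uniq s /\ fine (\esum_(t in [set: T]) (h t)%:E) - e < \sum_(t <- s) h t.
Proof.
move=> h0 e0 fin.
have fn : \esum_(t in [set: T]) (h t)%:E \is a fin_num.
  by rewrite ge0_fin_numE // esum_ge0 // => t _; rewrite lee_fin.
have [x [F [finF _] <-] hx] := ub_ereal_sup_adherent e0 fn.
exists (finmap.enum_fset (fset_set F)); split; first exact: finmap.fset_uniq.
by move: hx; rewrite fsbig_finite // sumEFin -lte_fin EFinB fineK.
Qed.

Variable n : nat.
Local Notation W := (seq 'I_n).
Implicit Types (f g : W -> R[i]) (s : seq W).

Definition sumsq f s := \sum_(w <- s) csq (f w).

Lemma sumsq_ge0 f s : 0 <= sumsq f s.
Proof. by apply: sumr_ge0 => w _; exact: csq_ge0. Qed.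

Lemma l2P f : l2 f <-> exists B, forall s, uniq s -> sumsq f s <= B.
Proof.
split=> [f_l2 | [B hB]]; last first.
  by apply: le_lt_trans (esum_le hB) _; rewrite ltry.
have fn : \esum_(w in [set: W]) (csq (f w))%:E \is a fin_num.
  by rewrite ge0_fin_numE // esum_ge0 // => w _; rewrite lee_fin csq_ge0.
exists (fine (\esum_(w in [set: W]) (csq (f w))%:E)) => s s_uniq.
by rewrite -lee_fin fineK //; apply: fsum_le_esum => // w; exact: csq_ge0.
Qed.

Lemma l2norm_ge0 f : 0 <= l2norm f.
Proof. exact: sqrtr_ge0. Qed.

Lemma l2norm_sqr f : l2norm f ^+ 2 = fine (\esum_(w in [set: W]) (csq (f w))%:E).
Proof.
rewrite /l2norm sqr_sqrtr // fine_ge0 // esum_ge0 // => w _.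
by rewrite lee_fin csq_ge0.
Qed.

Lemma sumsq_le_l2norm f s : l2 f -> uniq s -> sumsq f s <= l2norm f ^+ 2.
Proof.
move=> f_l2 s_uniq; have fn : \esum_(w in [set: W]) (csq (f w))%:E \is a fin_num.
  by rewrite ge0_fin_numE // esum_ge0 // => w _; rewrite lee_fin csq_ge0.
rewrite l2norm_sqr -lee_fin fineK //.
by apply: fsum_le_esum => // w; exact: csq_ge0.
Qed.

Lemma l2norm_approx f e : l2 f -> 0 < e ->
  exists s, uniq s /\ l2norm f ^+ 2 - e < sumsq f s.
Proof. by move=> f_l2 e0; rewrite l2norm_sqr; apply: esum_approx => // w; exact: csq_ge0. Qed.

Lemma l2_lin a f g : l2 f -> l2 g -> l2 (fun w => a * f w + g w).
Proof.
move=> /l2P [B1 h1] /l2P [B2 h2]; apply/l2P.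
exists (2 * csq a * B1 + 2 * B2) => s s_uniq.
apply: (le_trans (y := \sum_(w <- s) (2 * csq a * csq (f w) + 2 * csq (g w)))).
  by apply: ler_sum => w _; rewrite -mulrA -csqM; exact: csqD_le.
rewrite big_split /= -!mulr_sumr; apply: lerD; last by rewrite ler_pM2l ?h2.
by apply: ler_wpM2l; [rewrite mulr_ge0 ?csq_ge0 | exact: h1].
Qed.

Lemma l2_Lcr i f : l2 f -> l2 (Lcr i f).
Proof.
move=> /l2P [B hB]; apply/l2P; exists B => s s_uniq.
pose starts_i v := if v is j :: _ then j == i else false.
have -> : sumsq (Lcr i f) s = sumsq f [seq behead v | v <- s & starts_i v].
  rewrite /sumsq big_map big_filter [RHS]big_mkcond /=.
  apply: eq_bigr => -[|j w] _ /=; first by rewrite csq0.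
  by rewrite /starts_i; case: (j == i); rewrite ?csq0.
apply: hB; rewrite map_inj_in_uniq ?filter_uniq //.
by move=> [|j w] [|k v]; rewrite !mem_filter //= => /andP[/eqP -> _] /andP[/eqP -> _] ->.
Qed.

Lemma l2_0 : l2 (fun _ : W => 0 : R[i]).
Proof. by apply/l2P; exists 0 => s _; rewrite /sumsq big1 // => w _; exact: csq0. Qed.

Definition vac : W -> R[i] := fun w => (w == [::])%:R.

Lemma csq_vac w : csq (vac w) = (w == [::])%:R.
Proof. by rewrite /vac; case: (w == [::]); rewrite ?csq0 // csq_real expr1n. Qed.

Lemma l2_vac : l2 vac.
Proof.
apply/l2P; exists 1 => s s_uniq; rewrite /sumsq; under eq_bigr do rewrite csq_vac.
have [nil_s|nil_s] := boolP ([::] \in s).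
  by rewrite (bigD1_seq [::]) //= big1 ?addr0 // => w /negbTE ->.
by rewrite big1_seq ?ler01 // => w /= w_s; case: eqP w_s nil_s => // -> ->.
Qed.

Lemma l2norm_ge1 f : l2 f -> csq (f [::]) = 1 -> 1 <= l2norm f.
Proof.
move=> f_l2 f_nil; have := @sumsq_le_l2norm f [:: [::]] f_l2 isT.
rewrite /sumsq big_seq1 f_nil.
by have := l2norm_ge0 f; nra.
Qed.

End SquareSummable.
Arguments l2_0 {R n}.
Arguments vac {R n}.
Arguments l2_vac {R n}.

Section Words.
Variable n : nat.
Local Notation W := (seq 'I_n).

Fixpoint words k : seq W :=
  if k is k'.+1 then [::] :: [seq i :: w | i <- enum 'I_n, w <- words k'] else [:: [::]].

Lemma mem_words k w : (w \in words k) = (size w <= k)%N.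
Proof.
elim: k w => [|k IH] [|i w] //=; rewrite in_cons /= ltnS -IH.
apply/allpairsP/idP => [[[j v] [_ v_k /= [_ ->]]] // | w_k].
by exists (i, w); rewrite mem_enum.
Qed.

Lemma uniq_words k : uniq (words k).
Proof.
elim: k => [|k IH] //=; apply/andP; split.
  by apply/negP => /allpairsP [[j v] [_ _]].
apply: allpairs_uniq => //; first exact: enum_uniq.
by move=> [j v] [j' v'] _ _ /= [-> ->].
Qed.

Lemma words_cover (s : seq W) : exists K, {subset s <= words K}.
Proof.
exists (\max_(w <- s) size w) => w w_s.
by rewrite mem_words; apply: (leq_bigmax_seq _ w_s).
Qed.

Lemma sum_words_sub (V : zmodType) (F : W -> V) k m : (k <= m)%N ->
  \sum_(w <- words m) F w - \sum_(w <- words k) F w =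
  \sum_(w <- words m | (k < size w)%N) F w.
Proof.
move=> km; rewrite (bigID (fun w => (size w <= k)%N)) /=.
have -> : \sum_(w <- words m | (size w <= k)%N) F w = \sum_(w <- words k) F w.
  rewrite -big_filter; apply/perm_big/uniq_perm; rewrite ?filter_uniq ?uniq_words //.
  by move=> w; rewrite mem_filter !mem_words andb_idr // => /leq_trans; apply.
by rewrite addrAC subrr add0r; apply: eq_bigl => w; rewrite ltnNge.
Qed.

End Words.

Section Isometries.
Variables (R : realType) (H : lmodType R[i]) (hs : hilbert H).
Variables (n : nat) (S : 'I_n -> H -> H).
Hypothesis hS : En_rep hs S.
Local Notation ip := (ip hs).
Local Notation hn := (hnorm hs).
Implicit Types (x y : H) (w : seq 'I_n).

Lemma S_linmap i : linmap (S i).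
Proof. by case: hS => /(_ i) [S_lin _] _; exact: S_lin. Qed.

Lemma S_ip i x y : ip (S i x) (S i y) = ip x y.
Proof. by case: hS => _ [S_iso _]; exact: S_iso. Qed.

Lemma S_orth i j x y : i != j -> ip (S i x) (S j y) = 0.
Proof. by case: hS => _ [_ S_orth]; exact: S_orth. Qed.

Lemma Sword_linmap w : linmap (Sword S w).
Proof. by elim: w => [|i w IH]; [move | exact: linmap_comp (S_linmap i) IH]. Qed.

Lemma Sword_ip w x y : ip (Sword S w x) (Sword S w y) = ip x y.
Proof. by elim: w => [|i w IH] //=; rewrite S_ip IH. Qed.

Lemma Sword_hn w x : hn (Sword S w x) = hn x.
Proof. by rewrite /hnorm Sword_ip. Qed.

Lemma wandering_of_orth e : ip e e = 1 ->
  (forall w, w != [::] -> ip e (Sword S w e) = 0) -> wandering hs S e.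
Proof.
move=> e1 e_perp w; elim: w => [|i w IH] [|j v] /=.
- by rewrite e1.
- by rewrite (e_perp (j :: v)).
- by rewrite ip_conj (e_perp (i :: w)) // rmorph0.
have [<-|ij] := eqVneq i j; first by rewrite S_ip IH eqseq_cons eqxx.
by rewrite S_orth // eqseq_cons (negbTE ij).
Qed.


Lemma sumsq_subset (f : seq 'I_n -> R[i]) (s t : seq (seq 'I_n)) :
  uniq s -> uniq t -> {subset s <= t} -> sumsq f s <= sumsq f t.
Proof.
move=> s_uniq t_uniq st; rewrite /sumsq [leRHS](bigID (mem s)) /=.
have -> : \sum_(w <- t | w \in s) csq (f w) = \sum_(w <- s) csq (f w).
  rewrite -big_filter; apply/perm_big/uniq_perm; rewrite ?filter_uniq //.
  by move=> w; rewrite mem_filter andb_idr //; apply: st.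
by rewrite lerDl sumr_ge0 // => w _; exact: csq_ge0.
Qed.

Section FromWandering.
Variable eta : H.
Hypothesis eta_wandering : wandering hs S eta.
Local Notation W := (seq 'I_n).
Local Notation xi w := (Sword S w eta).
Implicit Types (f g : W -> R[i]).

Lemma hn_sqr_orth (s : seq W) (a : W -> R[i]) : uniq s ->
  hn (\sum_(w <- s) a w *: xi w) ^+ 2 = \sum_(w <- s) csq (a w).
Proof.
move=> s_uniq; rewrite hn_sqr ip_suml Re_sum; apply: eq_big_seq => w w_s.
rewrite ipZl ip_sumr (bigD1_seq w w_s s_uniq) /= big1 => [|v /negbTE vw].
  by rewrite addr0 ipZr eta_wandering eqxx mulr1 mulcJ.
by rewrite ipZr eta_wandering eq_sym vw mulr0.
Qed.

Definition partial_sum k f := \sum_(w <- words n k) f w *: xi w.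

Lemma partial_sum_lin k a f g :
  partial_sum k (fun w => a * f w + g w) = a *: partial_sum k f + partial_sum k g.
Proof.
rewrite /partial_sum scaler_sumr -big_split; apply: eq_bigr => w _.
by rewrite scalerA scalerDl.
Qed.

Lemma hn_partial_sum k f : hn (partial_sum k f) ^+ 2 = sumsq f (words n k).
Proof. by rewrite hn_sqr_orth // uniq_words. Qed.

Lemma hn_partial_sumB k m f : (k <= m)%N ->
  hn (partial_sum m f - partial_sum k f) ^+ 2 = sumsq f (words n m) - sumsq f (words n k).
Proof.
move=> km; rewrite /partial_sum /sumsq !(sum_words_sub _ km) -big_filter.
by rewrite hn_sqr_orth ?big_filter // filter_uniq // uniq_words.
Qed.

Lemma sumsq_words_mono f k m : (k <= m)%N -> sumsq f (words n k) <= sumsq f (words n m).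
Proof.
move=> km; apply: sumsq_subset; rewrite ?uniq_words // => w.
by rewrite !mem_words => /leq_trans; apply.
Qed.

Lemma sumsq_words_approx f e : l2 f -> 0 < e ->
  exists K, l2norm f ^+ 2 - e < sumsq f (words n K).
Proof.
move=> f_l2 e0; have [s [s_uniq s_approx]] := l2norm_approx f_l2 e0.
have [K sK] := words_cover s; exists K.
by apply: lt_le_trans s_approx _; apply: sumsq_subset; rewrite ?uniq_words.
Qed.

Lemma partial_sum_cauchy f : l2 f -> hcauchy hs (partial_sum^~ f).
Proof.
move=> f_l2 e e0.
have [K hK] := sumsq_words_approx f_l2 (exprn_gt0 2 e0).
have tail_lt k m : (K <= k)%N -> (k <= m)%N -> hn (partial_sum m f - partial_sum k f) < e.
  move=> Kk km; rewrite -(ltr_pXn2r (_ : 0 < 2)%N) ?nnegrE ?hn_ge0 ?(ltW e0) //.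
  rewrite hn_partial_sumB //.
  have := sumsq_le_l2norm f_l2 (uniq_words n m); have := sumsq_words_mono f Kk.
  lra.
exists K => j k Kj Kk; have [kj|/ltnW jk] := leqP k j; first exact: tail_lt.
by rewrite hn_sub_sym; apply: tail_lt.
Qed.

(* Outside l^2 the partial sums need not converge and [Xeta f] is then the junk value 0. *)
Definition Xeta f : H := xget 0 [set l | hcvg hs (partial_sum^~ f) l].

Lemma Xeta_cvg f : l2 f -> hcvg hs (partial_sum^~ f) (Xeta f).
Proof. by move=> f_l2; apply: xgetPex; apply: hcauchy_cvg; exact: partial_sum_cauchy. Qed.

Lemma Xeta_lin a f g : l2 f -> l2 g ->
  Xeta (fun w => a * f w + g w) = a *: Xeta f + Xeta g.
Proof.
move=> f_l2 g_l2; apply: hcvg_uniq (Xeta_cvg (l2_lin a f_l2 g_l2)) _.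
have := hcvg_lin a (Xeta_cvg f_l2) (Xeta_cvg g_l2).
by under [X in hcvg _ X]funext => k do rewrite -partial_sum_lin.
Qed.

Lemma hn_Xeta f : l2 f -> hn (Xeta f) = l2norm f.
Proof.
move=> f_l2; have cvg_f := Xeta_cvg f_l2; apply/eqP; rewrite eq_le.
apply/andP; split.
  apply: (hn_cvg_le cvg_f) => e e0; exists 0%N => k _.
  rewrite ler_wpDr ?(ltW e0) // -(ler_pXn2r (_ : 0 < 2)%N) ?nnegrE ?hn_ge0 ?l2norm_ge0 //.
  by rewrite hn_partial_sum sumsq_le_l2norm ?uniq_words.
rewrite -(ler_pXn2r (_ : 0 < 2)%N) ?nnegrE ?hn_ge0 ?l2norm_ge0 //.
apply/ler_addgt0Pr => e e0; have [K hK] := sumsq_words_approx f_l2 e0.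
suff : Num.sqrt (sumsq f (words n K)) <= hn (Xeta f).
  rewrite -(ler_pXn2r (_ : 0 < 2)%N) ?nnegrE ?hn_ge0 ?sqrtr_ge0 //.
  by rewrite sqr_sqrtr ?sumsq_ge0 //; lra.
apply: (hn_cvg_ge (N := K) cvg_f) => k Kk.
apply: le_trans (ler_wsqrtr (sumsq_words_mono f Kk)) _.
by rewrite -hn_partial_sum sqrtr_sqr ger0_norm ?hn_ge0.
Qed.

Lemma S_partial_sum i k f : S i (partial_sum k f) = partial_sum k.+1 (Lcr i f).
Proof.
rewrite /partial_sum (linmap_sum _ _ (S_linmap i)) /= big_cons scale0r add0r.
rewrite big_allpairs_dep /= (bigD1_seq i) ?mem_enum ?enum_uniq //= [X in _ + X]big1.
  by rewrite addr0; apply: eq_bigr => w _; rewrite eqxx (linmapZ (S_linmap i)).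
by move=> j /negbTE ji; apply: big1 => w _; rewrite ji scale0r.
Qed.

Lemma S_Xeta i f : l2 f -> S i (Xeta f) = Xeta (Lcr i f).
Proof.
move=> f_l2.
have S_cvg := hcvg_isometry (linmapB (S_linmap i)) (Sword_hn [:: i]) (Xeta_cvg f_l2).
apply: hcvg_uniq (Xeta_cvg (l2_Lcr i f_l2)) => e /S_cvg [N hN].
by exists N.+1 => -[|k] // /hN; rewrite /= S_partial_sum.
Qed.

Lemma wandering_Xsigma : exists X, in_Xsigma hs S X /\ bounded_below hs X.
Proof.
exists Xeta; split; first split.
- by move=> a f g; exact: Xeta_lin.
- by split; [exists 1 => f f_l2; rewrite hn_Xeta // mul1r | exact: S_Xeta].
by exists 1; split => // f f_l2; rewrite mul1r hn_Xeta.
Qed.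

End FromWandering.

Section FromBoundedBelow.
Local Notation W := (seq 'I_n).
Variable X : (W -> R[i]) -> H.
Hypothesis X_Xsigma : in_Xsigma hs S X.
Variable c : R.
Hypothesis c_gt0 : 0 < c.
Hypothesis X_ge : forall f, l2 f -> c * l2norm f <= hn (X f).
Implicit Types (f g : W -> R[i]) (z : H).

Lemma X_lin a f g : l2 f -> l2 g -> X (fun w => a * f w + g w) = a *: X f + X g.
Proof. by case: X_Xsigma => X_lin _; exact: X_lin. Qed.

Lemma S_X i f : l2 f -> S i (X f) = X (Lcr i f).
Proof. by case: X_Xsigma => _ [_ S_X]; exact: S_X. Qed.

Definition Ximage x := exists2 f, l2 f & x = X f.

Definition Xperp x := exists f, [/\ l2 f, f [::] = 0 & x = X f].

Definition Xperp_closure x := exists2 u, (forall k, Xperp (u k)) & hcvg hs u x.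

Lemma Xperp_lin a x z : Xperp x -> Xperp z -> Xperp (a *: x + z).
Proof.
move=> [f [f_l2 f0 ->]] [g [g_l2 g0 ->]].
exists (fun w => a * f w + g w); split; first exact: l2_lin.
  by rewrite f0 g0 mulr0 add0r.
by rewrite X_lin.
Qed.

Lemma X0 : X (fun => 0) = 0.
Proof.
have := X_lin (-1) l2_0 l2_0; rewrite scaleN1r addNr => <-.
by congr X; apply: funext => w; rewrite mulr0 addr0.
Qed.

Lemma Xperp0 : Xperp 0.
Proof. by exists (fun => 0); split; rewrite ?X0 //; exact: l2_0. Qed.

Lemma Xperp_mid x z : Xperp x -> Xperp z -> Xperp ((2^-1)%:C *: (x + z)).
Proof.
move=> Xx Xz; rewrite scalerDr -[X in _ + X]addr0.
by apply: Xperp_lin Xx (Xperp_lin _ Xz Xperp0).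
Qed.

Lemma Xperp_Ximage x : Xperp x -> Ximage x.
Proof. by move=> [f [f_l2 _ ->]]; exists f. Qed.

Lemma S_Ximage i x : Ximage x -> Xperp (S i x).
Proof. by move=> [f f_l2 ->]; exists (Lcr i f); split; [exact: l2_Lcr | | exact: S_X]. Qed.

Lemma Sword_Ximage w x : Ximage x -> Ximage (Sword S w x).
Proof. by elim: w => [|i w IH] //= /IH /(S_Ximage i) /Xperp_Ximage. Qed.

Lemma Sword_Xperp w x : w != [::] -> Ximage x -> Xperp (Sword S w x).
Proof. by case: w => [|i w] //= _ /(Sword_Ximage w) /(S_Ximage i). Qed.

Lemma Xperp_sub_closure x : Xperp x -> Xperp_closure x.
Proof. by move=> Xx; exists (fun => x) => //; exact: hcvg_cst. Qed.

Lemma Xperp_closure_lin a x z :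
  Xperp_closure x -> Xperp_closure z -> Xperp_closure (a *: x + z).
Proof.
move=> [u Xu ux] [v Xv vz]; exists (fun k => a *: u k + v k); last exact: hcvg_lin.
by move=> k; apply: Xperp_lin.
Qed.

Lemma Sword_Xperp_closure w x : Xperp_closure x -> Xperp_closure (Sword S w x).
Proof.
case: w => [|i w] //= [u Xu ux].
exists (S i \o Sword S w \o u); last first.
  exact: (hcvg_isometry (linmapB (Sword_linmap (i :: w))) (Sword_hn (i :: w)) ux).
by move=> k; apply: (Sword_Xperp (w := i :: w)) => //; exact: Xperp_Ximage.
Qed.

Definition Xvac := X vac.

Lemma c_le_hn_Xvac_sub x : Xperp x -> c <= hn (Xvac - x).
Proof.
move=> [f [f_l2 f0 ->]].
have g_l2 := l2_lin (-1) f_l2 l2_vac.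
have := X_ge g_l2; rewrite (X_lin (-1) f_l2 l2_vac) scaleNr scale1r addrC.
by apply: le_trans; rewrite ler_pMr // l2norm_ge1 // f0 mulr0 add0r csq_vac eqxx.
Qed.

Definition Xvac_dist := inf [set hn (Xvac - x) | x in Xperp].

Lemma Xvac_dist_has_inf : has_inf [set hn (Xvac - x) | x in Xperp].
Proof.
split; first by exists (hn (Xvac - 0)), 0; [exact: Xperp0 |].
by exists c => _ [x Xx <-]; exact: c_le_hn_Xvac_sub.
Qed.

Lemma Xvac_dist_le x : Xperp x -> Xvac_dist <= hn (Xvac - x).
Proof. by move=> Xx; apply: (ge_inf Xvac_dist_has_inf.2); exists x. Qed.

Lemma c_le_Xvac_dist : c <= Xvac_dist.
Proof.
apply: lb_le_inf; first exact: Xvac_dist_has_inf.1.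
by move=> _ [x Xx <-]; exact: c_le_hn_Xvac_sub.
Qed.

Lemma Xvac_dist_le_closure x : Xperp_closure x -> Xvac_dist <= hn (Xvac - x).
Proof.
move=> [u Xu ux]; apply: (hn_cvg_ge (N := 0%N) (hcvgBl Xvac ux)) => k _.
exact: Xvac_dist_le.
Qed.

Lemma Xvac_dist_gt0 : 0 < Xvac_dist.
Proof. exact: lt_le_trans c_gt0 c_le_Xvac_dist. Qed.

Lemma Xvac_closest_point : exists2 p, Xperp_closure p & hn (Xvac - p) = Xvac_dist.
Proof.
have /choice [u u_min] k : exists x, Xperp x /\ hn (Xvac - x) < Xvac_dist + k.+1%:R^-1.
  have k_gt0 : 0 < k.+1%:R^-1 :> R by rewrite invr_gt0.
  by have [_ [x Xx <-] x_min] := inf_adherent k_gt0 Xvac_dist_has_inf; exists x.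
have Xu k : Xperp (u k) := (u_min k).1.
have u_near e :
    0 < e -> exists N, forall k, (N <= k)%N -> hn (Xvac - u k) <= Xvac_dist + e.
  move=> /natinv_lt [N hN]; exists N => k /hN; have := (u_min k).2.
  by move: (k.+1%:R^-1) => t; lra.
have u_cauchy := minimizing_cauchy Xperp_mid (ltW Xvac_dist_gt0) Xvac_dist_le Xu u_near.
have [p up] := hcauchy_cvg u_cauchy.
have Xp : Xperp_closure p by exists u.
exists p => //; apply/eqP; rewrite eq_le Xvac_dist_le_closure // andbT.
exact: hn_cvg_le (hcvgBl Xvac up) u_near.
Qed.

Lemma Xvac_closest_orth p x : Xperp_closure p -> hn (Xvac - p) = Xvac_dist ->
  Xperp_closure x -> ip (Xvac - p) x = 0.
Proof.
move=> Xp p_min Xx; apply: ip_eq0_of_min => a.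
have -> : Xvac - p + a *: x = Xvac - ((- a) *: x + p).
  by rewrite scaleNr opprD opprK addrA addrAC.
by rewrite p_min; apply/Xvac_dist_le_closure/Xperp_closure_lin.
Qed.

Lemma Sword_Xvac_closest p w :
  Xperp_closure p -> w != [::] -> Xperp_closure (Sword S w (Xvac - p)).
Proof.
move=> Xp w_nil; rewrite (linmapB (Sword_linmap w)) addrC -scaleN1r.
apply: Xperp_closure_lin; first exact: Sword_Xperp_closure.
by apply/Xperp_sub_closure/Sword_Xperp => //; exists vac; first exact: l2_vac.
Qed.

Lemma bounded_below_wandering : exists eta, wandering hs S eta.
Proof.
have [p Xp p_min] := Xvac_closest_point.
exists ((Xvac_dist^-1)%:C *: (Xvac - p)); apply: wandering_of_orth => [|w w_nil].
  rewrite ipZl ipZr conj_realC ipxx p_min mulrA -!rmorphM /= -expr2 -exprMn.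
  by rewrite mulVf ?gt_eqF ?Xvac_dist_gt0 // expr1n.
rewrite (linmapZ (Sword_linmap w)) ipZl ipZr Xvac_closest_orth ?mulr0 //.
exact: Sword_Xvac_closest.
Qed.

End FromBoundedBelow.
End Isometries.

Theorem corollary2p9 (R : realType) (n : nat) (H : lmodType R[i]) (hs : hilbert H)
  (S : 'I_n -> H -> H) :
  (2 <= n)%N -> En_rep hs S ->
  ((exists eta : H, wandering hs S eta) <->
   (exists X : (seq 'I_n -> R[i]) -> H, in_Xsigma hs S X /\ bounded_below hs X)).
Proof.
move=> _ hS; split=> [[eta eta_wandering] | [X [X_Xsigma [c [c_gt0 X_ge]]]]].
  exact (wandering_Xsigma hS eta_wandering).
exact (bounded_below_wandering hS X_Xsigma c_gt0 X_ge).
Qed.
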